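(* Let $n>1$, let $D$ be a set, and let $f:\mathcal{S}^n\to D$ be a multidimensional rightward function. Let $\iota':\mathcal{S}^n\to\mathcal{S}^{n-1}$ be defined by $\iota'(\sigma\bullet[\delta])=\delta$ for all $\sigma\in\mathcal{S}^n$, $\delta\in\mathcal{S}^{n-1}$. Then the function product $f\times\iota'$, given by $(f\times\iota')(\sigma)=(f(\sigma),\iota'(\sigma))$ with values in $D\times\mathcal{S}^{n-1}$, is memoryless.
   Context: $\mathit{Sc}$ is a set of scalars. $\mathcal{S}^0=\mathit{Sc}$, $\mathcal{S}^n$ ($n\ge1$) is the set of finite sequences of elements of $\mathcal{S}^{n-1}$; $\bullet$ is concatenation, $[\delta]$ a one-element sequence. A function on sequences is rightward if there is $\oplus'$ with $F(x\bullet[a])=F(x)\oplus' a$ for all $x,a$; leftward if there is $\otimes'$ with $F([a]\bullet x)=a\otimes' F(x)$. $f:\mathcal{S}^n\to D$ ($n>1$) is multidimensional rightward if there exist a family $\mathbb{G}:D\to(\mathcal{S}^{n-1}\to D)$ of rightward (or leftward) functions and $\otimes:D\times D\to D$ such that $f(\sigma\bullet[\delta])=f(\sigma)\otimes\mathbb{G}(f(\sigma))(\delta)$ for all $\sigma,\delta$. A function $F:\mathcal{S}^n\to E$ is memoryless if there exist a rightward or leftward $g:\mathcal{S}^{n-1}\to E$ and $\oplus:E\times E\to E$ with $F(\sigma\bullet[\delta])=F(\sigma)\oplus g(\delta)$ for all $\sigma\in\mathcal{S}^n,\delta\in\mathcal{S}^{n-1}$. *)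

From mathcomp Require Import all_boot.
Set Implicit Arguments. Unset Strict Implicit. Unset Printing Implicit Defensive.

Fixpoint Seqs (Sc : Type) (n : nat) : Type :=
  match n with 0 => Sc | k.+1 => seq (Seqs Sc k) end.

(* F(x • [a]) = F(x) ⊕' a ;  x • [a] is rcons x a *)
Definition rightward (T E : Type) (F : seq T -> E) : Prop :=
  exists op : E -> T -> E, forall x a, F (rcons x a) = op (F x) a.

Definition leftward (T E : Type) (F : seq T -> E) : Prop :=
  exists op : T -> E -> E, forall x a, F (a :: x) = op a (F x).

(* f : S^n -> D with S^n = seq S^(n-1), S^(n-1) = seq T *)
Definition multidim_rightward (T D : Type) (f : seq (seq T) -> D) : Prop :=
  exists (G : D -> seq T -> D) (otimes : D -> D -> D),
    (forall d, rightward (G d) \/ leftward (G d)) /\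
    forall sigma delta, f (rcons sigma delta) = otimes (f sigma) (G (f sigma) delta).

Definition memoryless (T E : Type) (F : seq (seq T) -> E) : Prop :=
  exists (g : seq T -> E) (oplus : E -> E -> E),
    (rightward g \/ leftward g) /\
    forall sigma delta, F (rcons sigma delta) = oplus (F sigma) (g delta).

From mathcomp Require Import all_boot.

Lemma rightward_id (T : Type) : rightward (@id (seq T)).
Proof. by exists (@rcons T). Qed.

Lemma rightward_pairl (T C E : Type) (c : C) (F : seq T -> E) :
  rightward F -> rightward (fun x => (c, F x)).
Proof.
move=> [op opE]; exists (fun p a => (p.1, op p.2 a)) => x a.
by rewrite opE.
Qed.

(* The first component carries all the memory: f (σ • [δ]) is computed from
   f σ and δ alone, so g δ need only remember δ; the shape of the family G is
   irrelevant. *)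
Lemma multidim_rightward_pair_last_memoryless (T D : Type)
    (f : seq (seq T) -> D) (last_block : seq (seq T) -> seq T) :
  multidim_rightward f ->
  (forall sigma delta, last_block (rcons sigma delta) = delta) ->
  memoryless (fun sigma => (f sigma, last_block sigma)).
Proof.
move=> [G [otimes [_ fE]]] lastE.
exists (fun delta => (f [::], delta)),
       (fun p q => (otimes p.1 (G p.1 q.2), q.2)).
split; first by left; apply/rightward_pairl/rightward_id.
by move=> sigma delta; rewrite fE lastE.
Qed.

(* n = k.+2 ranges exactly over n > 1 *)
Theorem proposition5p6 (Sc : Type) (k : nat) (D : Type)
    (f : Seqs Sc k.+2 -> D) (iota' : Seqs Sc k.+2 -> Seqs Sc k.+1) :
  multidim_rightward f ->
  (forall (sigma : Seqs Sc k.+2) (delta : Seqs Sc k.+1),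
      iota' (rcons sigma delta) = delta) ->
  memoryless (fun sigma : Seqs Sc k.+2 => (f sigma, iota' sigma)).
Proof. exact: multidim_rightward_pair_last_memoryless. Qed.
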